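(* Let $K$ be a field, $n>0$, $B=K[x_1,\dots,x_n]$, and $\varphi:B\to B$ a $K$-algebra homomorphism. Let $d,r\in\mathbb{N}$ with $r>0$ and $h_1,\dots,h_r\in B_{\le d}$. Let $m>n+d$ be an integer and suppose there is no nontrivial relation $\varphi(b_1)h_1+\dots+\varphi(b_r)h_r=0$ with $b_1,\dots,b_r\in B_{\le m}$ not all zero. Then $m\,(r-\deg(\varphi)^n)<2^n\deg(\varphi)^{n-1}(n+d)$.
   Context: $\deg(\varphi)=\max\{\deg\varphi(x_1),\dots,\deg\varphi(x_n)\}$ with $\deg$ the total degree; $B_{\le d}$ is the $K$-subspace of polynomials of total degree $\le d$. *)

From HB Require Import structures.
From mathcomp Require Import all_boot all_order all_algebra.
From mathcomp Require Import mpoly.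
Set Implicit Arguments. Unset Strict Implicit. Unset Printing Implicit Defensive.
Import Order.TTheory GRing.Theory Num.Theory.
Local Open Scope ring_scope.

(* total degree of a multivariate polynomial; msize p = 1 + total degree
   (and msize 0 = 0), so deg 0 is taken to be 0 here *)
Definition tdeg (n : nat) (K : fieldType) (p : {mpoly K[n]}) : nat :=
  (msize p).-1.

Definition hom_deg (n : nat) (K : fieldType)
  (phi : {mpoly K[n]} -> {mpoly K[n]}) : nat :=
  \max_(i < n) tdeg (phi 'X_i).

Definition deg_le (n : nat) (K : fieldType) (d : nat) (p : {mpoly K[n]}) : Prop :=
  (msize p <= d.+1)%N.

From HB Require Import structures.
From mathcomp Require Import all_boot all_order all_algebra.
From mathcomp Require Import mpoly.
From mathcomp Require Import zify ring.
Import Order.TTheory GRing.Theory Num.Theory.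

(** Let D = deg(phi) and N = D m + d.  The r * dim B_{<= m} polynomials
    phi(x^mu) h_i (|mu| <= m) lie in B_{<= N}, and the absence of relations
    says exactly that they are linearly independent, so
    r * C(m + n, n) <= C(N + n, n).  For D >= 1 each factor of the ratio
    C(N + n, n) / C(m + n, n) = prod_j (N + j) / (m + j) is at most N / m,
    whence r m^n <= (D m + d)^n <= D^n m^n + (2^n - 1) D^(n-1) m^(n-1) d
    (using d <= m), which rearranges to the claim.  For D = 0 the count
    alone is contradictory since d < m. *)

Lemma expnD_le_lin (x y k : nat) : y <= x ->
  (x + y) ^ k.+1 <= x ^ k.+1 + (2 ^ k.+1 - 1) * x ^ k * y.
Proof.
move=> le_yx; elim: k => [|k IHk]; first by rewrite !expn1 expn0 muln1 mul1n.
have le_yyx : x ^ k * y * y <= x ^ k * y * x by rewrite leq_mul2l le_yx orbT.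
rewrite [(x + y) ^ _]expnS [x ^ k.+2]expnS [x ^ k.+1]expnS (expnS 2 k.+1).
apply: leq_trans (leq_mul (leqnn (x + y)) IHk) _; rewrite (expnS x k).
nia.
Qed.

Lemma bin_ratio_le (a b n : nat) : b <= a ->
  'C(a + n, n) * b ^ n <= 'C(b + n, n) * a ^ n.
Proof.
move=> le_ba; elim: n => [|n IHn]; first by rewrite !bin0.
have binS_diag c : n.+1 * 'C(c + n.+1, n.+1) = (c + n.+1) * 'C(c + n, n).
  by rewrite -mul_bin_diag addnS.
rewrite -(leq_pmul2l (ltn0Sn n)) !mulnA !binS_diag !expnS.
rewrite [leqLHS]mulnACA [leqRHS]mulnACA; apply: leq_mul IHn.
by rewrite mulnDl [leqRHS]mulnDl mulnC leq_add2l leq_mul2l le_ba orbT.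
Qed.

Lemma ltn_bin2l n1 n2 k : 0 < k <= n2 -> n1 < n2 -> 'C(n1, k) < 'C(n2, k).
Proof.
case: k => // k; case: n2 => // n2; rewrite /= !ltnS => le_kn2 le_n12.
by rewrite binS -addn1 leq_add ?leq_bin2l ?bin_gt0.
Qed.

Lemma card_bmultinom n k : #|{: 'X_{1..n < k.+1}}| = 'C(k + n, n).
Proof.
pose tuple_of (mu : 'X_{1..n < k.+1}) : n.-tuple 'I_k.+1 :=
  [tuple inord (mu i) | i < n].
have mnm_le_mdeg (mu : 'X_{1..n}) i : mu i <= mdeg mu.
  by rewrite mdegE (bigD1 i) //= leq_addr.
have tuple_ofK mu i : tnth (tuple_of mu) i = mu i :> nat.
  by rewrite tnth_mktuple inordK // (leq_ltn_trans (mnm_le_mdeg _ i) (bmdeg mu)).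
have tuple_of_inj : injective tuple_of.
  by move=> mu nu eq_mu_nu; apply/val_inj/mnmP => i; rewrite -!tuple_ofK eq_mu_nu.
rewrite addnC -card_partial_ord_partitions -(card_imset _ tuple_of_inj).
congr #|pred_of_set _|; apply/setP => t; rewrite inE.
apply/imsetP/idP => [[mu _ ->]|t_deg].
  by rewrite big_tuple (eq_bigr _ (fun i _ => tuple_ofK mu i)) -mdegE -ltnS bmdeg.
have mu_deg : mdeg [multinom (tnth t i : nat) | i < n] < k.+1.
  by move: t_deg; rewrite big_tuple mdegE (eq_bigr _ (fun i _ => mnmE _ i)).
exists (BMultinom mu_deg) => //; apply: eq_from_tnth => i; apply: ord_inj.
by rewrite tuple_ofK /= mnmE.
Qed.

Local Open Scope ring_scope.

Lemma expn_le_excess_lt (n D d m r : nat) : (0 < n)%N -> (0 < D)%N -> (d < m)%N ->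
  (r * m ^ n <= (D * m + d) ^ n)%N ->
  m%:Z * (r%:Z - (D ^ n)%:Z) < (2 ^ n * D ^ n.-1 * (n + d))%:Z.
Proof.
case: n => // n _ D_gt0 lt_dm le_r.
have m_gt0 : (0 < m)%N := leq_ltn_trans (leq0n d) lt_dm.
have lin := @expnD_le_lin (D * m) d n (leq_trans (ltnW lt_dm) (leq_pmull m D_gt0)).
have {le_r lin} : (r * m <= D ^ n.+1 * m + (2 ^ n.+1 - 1) * D ^ n * d)%N.
  rewrite -(@leq_pmul2r (m ^ n)) ?expn_gt0 ?m_gt0 // -mulnA -expnS.
  apply: leq_trans le_r (leq_trans lin (eq_leq _)).
  by rewrite !expnMn (expnS m); set C := (2 ^ n.+1 - 1)%N; ring.
have : (0 < D ^ n)%N by rewrite expn_gt0 D_gt0.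
have : (0 < 2 ^ n.+1)%N by rewrite expn_gt0.
set P := (2 ^ n.+1)%N; set X := (D ^ n)%N; set Y := (D ^ n.+1)%N.
nia.
Qed.

Section DegreeBounds.
Context {K : fieldType} {n : nat}.
Implicit Types (p q : {mpoly K[n]}) (mu : 'X_{1..n}).

Lemma deg_leW p a b : (a <= b)%N -> deg_le a p -> deg_le b p.
Proof. by move=> le_ab /leq_trans; apply. Qed.

Lemma deg_le_sum (I : Type) (s : seq I) (P : pred I) (F : I -> {mpoly K[n]}) k :
  (forall i, P i -> deg_le k (F i)) -> deg_le k (\sum_(i <- s | P i) F i).
Proof.
move=> F_deg; apply: (big_ind (deg_le k)) => //; first by rewrite /deg_le msize0.
move=> p q p_deg q_deg; apply: leq_trans (msizeD_le _ _) _.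
by rewrite geq_max p_deg q_deg.
Qed.

Lemma deg_leZ c p k : deg_le k p -> deg_le k (c *: p).
Proof. exact/leq_trans/msizeZ_le. Qed.

Lemma deg_leM p q a b : deg_le a p -> deg_le b q -> deg_le (a + b) (p * q).
Proof.
rewrite /deg_le; have [->|p0] := eqVneq p 0; first by rewrite mul0r msize0.
have [->|q0] := eqVneq q 0; first by rewrite mulr0 msize0.
move=> p_deg q_deg; rewrite msizeM // -subn1 leq_subLR add1n.
by rewrite -addnS -addSn leq_add.
Qed.

Lemma deg_le_prod (I : Type) (s : seq I) (F : I -> {mpoly K[n]}) (G : I -> nat) :
  (forall i, deg_le (G i) (F i)) ->
  deg_le (\sum_(i <- s) G i) (\prod_(i <- s) F i).
Proof.
move=> F_deg; apply: (big_ind2 (fun k p => deg_le k p)) => //.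
- by rewrite /deg_le msize1.
- by move=> a p b q; apply: deg_leM.
Qed.

Lemma deg_leX p k e : deg_le k p -> deg_le (k * e) (p ^+ e).
Proof.
move=> p_deg; elim: e => [|e IHe]; first by rewrite /deg_le expr0 msize1.
by rewrite exprS mulnS; apply: deg_leM.
Qed.

Lemma deg_le_mpolyX k mu : (mdeg mu <= k)%N -> deg_le k 'X_[K, mu].
Proof. by rewrite /deg_le msizeX. Qed.

Lemma mcoeff_deg_le p k mu : deg_le k p -> (k < mdeg mu)%N -> p@_mu = 0.
Proof.
move=> p_deg lt_k_mu; apply/eqP.
by rewrite mcoeff_eq0 msize_mdeg_ge ?(leq_trans p_deg).
Qed.

End DegreeBounds.

Section HomDegree.
Variables (K : fieldType) (n : nat).
Variable phi : {lrmorphism {mpoly K[n]} -> {mpoly K[n]}}.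

Lemma deg_le_tdeg (p : {mpoly K[n]}) : deg_le (tdeg p) p.
Proof. exact: leqSpred. Qed.

Lemma deg_le_hom_deg_X (i : 'I_n) : deg_le (hom_deg phi) (phi 'X_i).
Proof.
apply: leq_trans (deg_le_tdeg _) _; rewrite ltnS.
exact: (@leq_bigmax _ (fun j : 'I_n => tdeg (phi 'X_j)) i).
Qed.

Lemma deg_le_hom_deg (p : {mpoly K[n]}) k :
  deg_le k p -> deg_le (hom_deg phi * k) (phi p).
Proof.
move=> p_deg; rewrite {1}(mpolyE p) linear_sum big_seq.
apply: deg_le_sum => mu mu_supp; rewrite linearZ; apply: deg_leZ.
apply: (@deg_leW _ _ _ (hom_deg phi * mdeg mu)).
  by rewrite leq_mul2l -ltnS (leq_trans (msize_mdeg_lt mu_supp) p_deg) orbT.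
rewrite (mpolyXE_id _ mu) rmorph_prod mdegE big_distrr /=; apply: deg_le_prod => i.
by rewrite rmorphXn; apply/deg_leX/deg_le_hom_deg_X.
Qed.

End HomDegree.

Lemma card_free_deg_le (K : fieldType) n N (I : finType) (v : I -> {mpoly K[n]}) :
  (forall i, deg_le N (v i)) ->
  (forall c : I -> K, \sum_i c i *: v i = 0 -> forall i, c i = 0) ->
  (#|I| <= 'C(N + n, n))%N.
Proof.
move=> v_deg v_free; rewrite -card_bmultinom.
pose A := \matrix_(i < #|I|, j < #|{: 'X_{1..n < N.+1}}|)
  (v (enum_val i))@_(enum_val j).
suff: row_free A by rewrite -row_leq_rank => /leq_trans; apply; exact: rank_leq_col.
apply: inj_row_free => u uA0.
pose c i := u 0 (enum_rank i).
have comb0 : \sum_i c i *: v i = 0.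
  apply/mpolyP => mu; rewrite mcoeff0 raddf_sum /=.
  have [mu_small | mu_big] := ltnP (mdeg mu) N.+1.
    transitivity ((u *m A) 0 (enum_rank (BMultinom mu_small))).
      rewrite mxE (reindex _ (onW_bij _ (enum_val_bij I))) /=; apply: eq_bigr => i _.
      by rewrite mcoeffZ mxE enum_rankK /c enum_valK.
    by rewrite uA0 mxE.
  rewrite big1 // => i _.
  by rewrite mcoeffZ (mcoeff_deg_le _ _ _ (v_deg i) mu_big) mulr0.
by apply/rowP => j; rewrite mxE -(v_free c comb0 (enum_val j)) /c enum_valK.
Qed.

Lemma no_relation_card_le (K : fieldType) n
    (phi : {lrmorphism {mpoly K[n]} -> {mpoly K[n]}})
    d r (h : 'I_r -> {mpoly K[n]}) m :
  (forall i, deg_le d (h i)) ->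
  (forall b : 'I_r -> {mpoly K[n]}, (forall i, deg_le m (b i)) ->
     \sum_(i < r) phi (b i) * h i = 0 -> forall i, b i = 0) ->
  (r * 'C(m + n, n) <= 'C(hom_deg phi * m + d + n, n))%N.
Proof.
move=> h_deg no_rel.
have mon_deg (mu : 'X_{1..n < m.+1}) : deg_le m 'X_[K, mu].
  by apply: deg_le_mpolyX; rewrite -ltnS bmdeg.
pose v (p : 'I_r * 'X_{1..n < m.+1}) := phi 'X_[p.2] * h p.1.
have := @card_free_deg_le K n (hom_deg phi * m + d) _ v.
rewrite card_prod card_ord card_bmultinom; apply.
  by move=> [i mu]; apply/deg_leM/h_deg/deg_le_hom_deg/mon_deg.
move=> c comb0.
pose b i := \sum_(mu : 'X_{1..n < m.+1}) c (i, mu) *: 'X_[mu].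
have b_deg i : deg_le m (b i) by apply: deg_le_sum => mu _; apply/deg_leZ/mon_deg.
have /(no_rel b b_deg) b0 : \sum_(i < r) phi (b i) * h i = 0.
  rewrite -[RHS]comb0 (eq_bigr (fun p => c (p.1, p.2) *: v (p.1, p.2))) => [|[] //].
  rewrite -(pair_bigA _ (fun i mu => c (i, mu) *: v (i, mu))).
  apply: eq_bigr => i _.
  rewrite linear_sum mulr_suml; apply: eq_bigr => mu _.
  by rewrite linearZ -scalerAl.
move=> [i mu]; have := congr1 (mcoeff mu) (b0 i).
rewrite /b raddf_sum (bigD1 mu) //= mcoeffZ mcoeffX eqxx mulr1 mcoeff0.
rewrite big1 ?addr0 //.
by move=> nu nu_mu; rewrite mcoeffZ mcoeffX -bmeqP (negbTE nu_mu) mulr0.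
Qed.

Theorem lemma4p1 (K : fieldType) (n : nat) (n_gt0 : (0 < n)%N)
  (phi : {lrmorphism {mpoly K[n]} -> {mpoly K[n]}})
  (d r : nat) (r_gt0 : (0 < r)%N) (h : 'I_r -> {mpoly K[n]})
  (hd : forall i, deg_le d (h i))
  (m : nat) (hm : (n + d < m)%N)
  (hrel : forall b : 'I_r -> {mpoly K[n]},
      (forall i, deg_le m (b i)) ->
      \sum_(i < r) phi (b i) * h i = 0 ->
      forall i, b i = 0) :
  (m%:Z * (r%:Z - (hom_deg phi ^ n)%:Z) <
     (2 ^ n * hom_deg phi ^ n.-1 * (n + d))%:Z)%R.
Proof.
have count := @no_relation_card_le K n phi d r h m hd hrel.
have lt_dm : (d < m)%N := leq_ltn_trans (leq_addl n d) hm.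
have [D0 | D_gt0] := posnP (hom_deg phi).
  move: count; rewrite D0 mul0n add0n => /(leq_trans (leq_pmull _ r_gt0)).
  by rewrite leqNgt ltn_bin2l ?n_gt0 ?leq_addl ?ltn_add2r.
apply: expn_le_excess_lt => //.
rewrite -(@leq_pmul2l 'C(m + n, n)) ?bin_gt0 ?leq_addl // mulnCA mulnA.
apply: leq_trans (leq_mul count (leqnn _)) _; apply: bin_ratio_le.
exact: leq_trans (leq_pmull m D_gt0) (leq_addr d _).
Qed.
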